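(* Let $n\geq 2$, $F$ a field of characteristic $0$, and let $R=M_n(F)$ carry the elementary $\mathbb{Z}_{n+1}$-grading induced by $(\overline 0,\overline 1,\dots,\overline{n-1})$. Then the monomial $x_1x_2\cdots x_n$ with $\deg x_i=\overline 1$ for all $i$ is a graded identity of $R$, while $R$ satisfies no graded monomial identity of length less than $n$. In particular, this monomial identity of length $n$ does not follow from graded monomial identities of smaller length, so the bound $n$ in the statement ''every graded monomial identity of an elementary grading on $M_n(F)$ follows from those of length at most $n$'' cannot be improved.
   Context: The elementary $G$-grading on $M_n(F)$ induced by $(g_1,\dots,g_n)\in G^n$ (here $G=\mathbb{Z}_{n+1}$, written additively) is $R_g=\mathrm{span}\{e_{pq}: g_q-g_p=g\}$. A graded monomial $x_1\cdots x_k$ (variables with prescribed degrees in $G$) is a graded identity if it vanishes whenever each $x_i$ is replaced by an element of $R_{\deg x_i}$; its length is $k$. *)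

From HB Require Import structures.
From mathcomp Require Import all_boot all_order all_algebra.
Set Implicit Arguments. Unset Strict Implicit. Unset Printing Implicit Defensive.
Import GRing.Theory.
Local Open Scope ring_scope.

(* The group G = Z_{m} is represented by 'I_m (here m = n.+1), with its
   canonical additive (Zp) structure. *)

(* Homogeneous component R_g of the elementary grading on M_n(F) induced by
   gs : 'I_n -> G : R_g = span{ e_pq : gs q - gs p = g }, i.e. the matrices
   supported on the entries (p,q) with gs q - gs p = g. *)
Definition elem_component (F : fieldType) (n m : nat)
  (gs : 'I_n -> 'I_m.+1) (g : 'I_m.+1) (A : 'M[F]_n) : Prop :=
  forall p q : 'I_n, A p q != 0 -> gs q - gs p = g.

Definition mx_monomial (F : fieldType) (n : nat) (xs : seq 'M[F]_n) : 'M[F]_n :=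
  foldr (fun A B => A *m B) 1%:M xs.

(* The graded monomial x_1 ... x_k with deg x_i = ds_i (ds : seq G, k = size ds)
   is a graded identity for the grading induced by gs. *)
Definition graded_monomial_identity (F : fieldType) (n m : nat)
  (gs : 'I_n -> 'I_m.+1) (ds : seq 'I_m.+1) : Prop :=
  forall xs : seq 'M[F]_n, size xs = size ds ->
    (forall i, (i < size ds)%N -> elem_component gs (nth 0 ds i) (nth 0 xs i)) ->
    mx_monomial xs = 0.

Definition std_tuple (n : nat) : 'I_n -> 'I_n.+1 := fun p => inZp p.

From HB Require Import structures.
From mathcomp Require Import all_boot all_order all_algebra.
Set Implicit Arguments.
Unset Strict Implicit.
Unset Printing Implicit Defensive.

Import GRing.Theory.
Local Open Scope ring_scope.

(* With degrees (0, 1, ..., n-1), a matrix of degree 1 lives on the first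
   superdiagonal, so a product of n of them lives on the n-th superdiagonal,
   which is empty.  Conversely, for a degree sequence of length k < n, the
   k+1 partial sums s_0, ..., s_k cannot cover Z_{n+1}, so some translate
   c + s_0, ..., c + s_k avoids n; these are then the degrees of indices
   p_0, ..., p_k, and the matrix units e_{p_i p_{i+1}} have the prescribed
   degrees and the nonzero product e_{p_0 p_k}. *)

Section Superdiagonal.

Variables (R : pzRingType) (n : nat).

Definition supported_on_superdiagonal (d : nat) (A : 'M[R]_n) : Prop :=
  forall p q : 'I_n, A p q != 0 -> val q = (val p + d)%N.

Lemma mulmx_nonzero_entry (A B : 'M[R]_n) p q :
  (A *m B) p q != 0 -> exists r, A p r != 0 /\ B r q != 0.
Proof.
rewrite mxE; case: (pickP (fun r => A p r * B r q != 0)) => [r nz_r _ | zero].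
  by exists r; split; apply: contraNneq nz_r => ->; rewrite ?mul0r ?mulr0.
by rewrite big1 ?eqxx // => r _; apply/eqP/negbFE/zero.
Qed.

Lemma superdiagonal1 : supported_on_superdiagonal 0 1%:M.
Proof.
by move=> p q; rewrite mxE addn0; case: (p =P q) => [-> | _]; rewrite ?eqxx.
Qed.

Lemma superdiagonal_mul d1 d2 (A B : 'M[R]_n) :
  supported_on_superdiagonal d1 A -> supported_on_superdiagonal d2 B ->
  supported_on_superdiagonal (d1 + d2) (A *m B).
Proof.
move=> suppA suppB p q /mulmx_nonzero_entry[r [nzA nzB]].
by rewrite (suppB _ _ nzB) (suppA _ _ nzA) addnA.
Qed.

Lemma superdiagonal_eq0 d (A : 'M[R]_n) :
  (n <= d)%N -> supported_on_superdiagonal d A -> A = 0.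
Proof.
move=> le_n_d suppA; apply/matrixP => p q; rewrite mxE.
apply/eqP; apply: contraT => /suppA q_eq.
by have := ltn_ord q; rewrite q_eq ltnNge (leq_trans le_n_d (leq_addl _ _)).
Qed.

End Superdiagonal.

Lemma mx_monomial_superdiagonal (F : fieldType) (n : nat) (xs : seq 'M[F]_n) :
  (forall A, A \in xs -> supported_on_superdiagonal 1 A) ->
  supported_on_superdiagonal (size xs) (mx_monomial xs).
Proof.
elim: xs => [|A xs IHxs] suppxs; first exact: superdiagonal1.
rewrite /= -add1n; apply: superdiagonal_mul; first by apply: suppxs; rewrite inE eqxx.
by apply: IHxs => B xsB; apply: suppxs; rewrite inE xsB orbT.
Qed.

Lemma std_tuple_lift_max (n : nat) (p : 'I_n) : std_tuple p = lift ord_max p.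
Proof.
by apply: val_inj; rewrite /= /bump leqNgt ltn_ord add0n modn_small // ltnS ltnW.
Qed.

Lemma std_tuple_degree1_superdiagonal (F : fieldType) (n : nat) (A : 'M[F]_n) :
  elem_component (@std_tuple n) (inZp 1) A -> supported_on_superdiagonal 1 A.
Proof.
move=> homA p q /homA /eqP; rewrite subr_eq => /eqP /(congr1 val) /=.
have n_gt0 : (0 < n)%N by apply: leq_ltn_trans (ltn_ord p).
by rewrite !modn_small ?add1n ?ltnS ?ltn_ord // => [->|||]; rewrite ?addn1 // ltnW.
Qed.

Lemma elem_component_delta_mx (F : fieldType) (n m : nat)
    (gs : 'I_n -> 'I_m.+1) (p q : 'I_n) :
  elem_component gs (gs q - gs p) (delta_mx p q : 'M[F]_n).
Proof.
move=> p' q'; rewrite mxE.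
by case: (p' =P p) => [-> | _]; case: (q' =P q) => [-> | _]; rewrite ?andbF ?eqxx.
Qed.

Lemma mx_monomial_delta_path (F : fieldType) (n : nat) (P : nat -> 'I_n) (m k : nat) :
  mx_monomial [seq (delta_mx (P i) (P i.+1) : 'M[F]_n) | i <- iota m k]
    (P m) (P (m + k)%N) = 1.
Proof.
elim: k m => [|k IHk] m /=; first by rewrite addn0 mxE eqxx.
rewrite mxE (bigD1 (P m.+1)) //= big1 ?addr0.
  by rewrite mxE !eqxx mul1r -addSnnS IHk.
by move=> r /negbTE r_neq; rewrite mxE r_neq andbF mul0r.
Qed.

Lemma not_graded_monomial_identity_path (F : fieldType) (n m : nat)
    (gs : 'I_n -> 'I_m.+1) (ds : seq 'I_m.+1) (P : nat -> 'I_n) :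
  (forall i, (i < size ds)%N -> gs (P i.+1) - gs (P i) = nth 0 ds i) ->
  ~ graded_monomial_identity F gs ds.
Proof.
move=> path_degrees gmi.
pose xs := [seq (delta_mx (P i) (P i.+1) : 'M[F]_n) | i <- iota 0 (size ds)].
have := gmi xs; rewrite size_map size_iota => /(_ erefl).
have homxs i : (i < size ds)%N -> elem_component gs (nth 0 ds i) (nth 0 xs i).
  move=> lt_i; rewrite (nth_map 0%N) ?size_iota // nth_iota // add0n.
  by rewrite -path_degrees //; apply: elem_component_delta_mx.
move=> /(_ homxs) /matrixP /(_ (P 0%N) (P (0 + size ds)%N)) /eqP.
by rewrite mx_monomial_delta_path mxE oner_eq0.
Qed.

Lemma exists_translate_avoiding (V : finZmodType) (s : seq V) (t : V) :
  (size s < #|V|)%N -> exists c : V, forall x, x \in s -> c + x != t.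
Proof.
move=> small_s; pose S := [set t - x | x in s].
have /subsetPn[c _ notSc] : ~~ ([set: V] \subset S).
  apply: contraTN small_s => /subset_leq_card; rewrite cardsT -leqNgt => le_VS.
  exact: leq_trans le_VS (leq_trans (leq_imset_card _ _) (card_size s)).
exists c => x sx; apply: contra notSc => /eqP sum_t.
by apply/imsetP; exists x => //; rewrite -sum_t addrK.
Qed.

Lemma std_tuple_path (n : nat) (ds : seq 'I_n.+1) :
  (size ds < n)%N ->
  exists P : nat -> 'I_n, forall i, (i < size ds)%N ->
    std_tuple (P i.+1) - std_tuple (P i) = nth 0 ds i.
Proof.
move=> small_ds; set k := size ds.
pose s i := \sum_(j < i) nth 0 ds j.
have [|c avoid_max] := @exists_translate_avoiding _ [seq s i | i <- iota 0 k.+1] ord_max.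
  by rewrite size_map size_iota card_ord.
have n_gt0 : (0 < n)%N by apply: leq_ltn_trans small_ds.
pose P i := odflt (Ordinal n_gt0) (unlift ord_max (c + s i)).
have std_P i : (i <= k)%N -> std_tuple (P i) = c + s i.
  move=> le_ik; have := avoid_max (s i); rewrite map_f ?mem_iota ?ltnS // => /(_ isT).
  rewrite /P; case: unliftP => [p -> _ | ->]; last by rewrite eqxx.
  by rewrite std_tuple_lift_max.
exists P => i lt_ik; rewrite std_P // std_P 1?ltnW //.
by rewrite /s big_ord_recr /= addrA addrC addrK.
Qed.

Theorem mainTheorem5 (F : fieldType) (n : nat) :
  (2 <= n)%N -> [pchar F] =i pred0 ->
  graded_monomial_identity F (@std_tuple n) (nseq n (inZp 1 : 'I_n.+1)) /\
  (forall ds : seq 'I_n.+1, (size ds < n)%N ->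
     ~ graded_monomial_identity F (@std_tuple n) ds).
Proof.
move=> _ _; split=> [xs | ds small_ds].
  rewrite size_nseq => size_xs homxs.
  apply: superdiagonal_eq0 (mx_monomial_superdiagonal _); first by rewrite size_xs.
  move=> A /(nthP 0)[i lt_i <-]; apply: std_tuple_degree1_superdiagonal.
  by have := homxs i; rewrite size_xs in lt_i; rewrite nth_nseq lt_i; apply.
have [P path_degrees] := std_tuple_path small_ds.
exact: not_graded_monomial_identity_path path_degrees.
Qed.
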